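(* Let $\mathbf A$ be an algebra, $n\ge2$, $I$ a nonempty set, and $\rho_i$ ($i\in I$) and $\alpha_0,\dots,\alpha_{n-2}$ congruences of $\mathbf A$. Then \[ \Big[\alpha_0,\dots,\alpha_{n-2},\bigvee_{i\in I}\rho_i\Big]=\bigvee_{J}\Big[\alpha_0,\dots,\alpha_{n-2},\bigvee_{i\in J}\rho_i\Big], \] where $J$ ranges over all finite nonempty subsets of $I$.
   Context: Higher commutator (Bulatov): for congruences $\alpha_0,\dots,\alpha_{n-1},\gamma$ of an algebra $\mathbf A$, say $\alpha_0,\dots,\alpha_{n-2}$ centralize $\alpha_{n-1}$ modulo $\gamma$ if for all tuples $\mathbf a_i,\mathbf b_i$ ($i<n$, with $\mathbf a_i\neq\mathbf b_i$ congruent modulo $\alpha_i$ coordinatewise) and every term operation $t$ such that $t(\mathbf x_0,\dots,\mathbf x_{n-2},\mathbf a_{n-1})\equiv_\gamma t(\mathbf x_0,\dots,\mathbf x_{n-2},\mathbf b_{n-1})$ for all $(\mathbf x_0,\dots,\mathbf x_{n-2})\in(\{\mathbf a_0,\mathbf b_0\}\times\dots\times\{\mathbf a_{n-2},\mathbf b_{n-2}\})\setminus\{(\mathbf b_0,\dots,\mathbf b_{n-2})\}$, we have $t(\mathbf b_0,\dots,\mathbf b_{n-2},\mathbf a_{n-1})\equiv_\gamma t(\mathbf b_0,\dots,\mathbf b_{n-2},\mathbf b_{n-1})$. $[\alpha_0,\dots,\alpha_{n-1}]$ is the smallest congruence $\gamma$ such that $\alpha_0,\dots,\alpha_{n-2}$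 centralize $\alpha_{n-1}$ modulo $\gamma$. *)

From Stdlib Require List.
From mathcomp Require Import all_boot.
Set Implicit Arguments. Unset Strict Implicit. Unset Printing Implicit Defensive.

Record algebra := Algebra {
  car : Type;
  sym : Type;
  ar : sym -> nat;
  op : forall f : sym, ('I_(ar f) -> car) -> car
}.

Definition brel (A : algebra) := car A -> car A -> Prop.

Inductive term (A : algebra) (V : Type) : Type :=
| Var : V -> term A V
| App : forall f : sym A, ('I_(ar f) -> term A V) -> term A V.

Fixpoint teval (A : algebra) (V : Type) (e : V -> car A) (t : term A V) : car A :=
  match t with
  | Var v => e v
  | App f ts => op (fun j => teval e (ts j))
  end.

Definition is_cong (A : algebra) (R : brel A) : Prop :=
  [/\ (forall x, R x x),
      (forall x y, R x y -> R y x),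
      (forall x y z, R x y -> R y z -> R x z) &
      (forall (f : sym A) (x y : 'I_(ar f) -> car A),
          (forall j, R (x j) (y j)) -> R (op x) (op y))].

Definition cjoin (A : algebra) (K : Type) (F : K -> brel A) : brel A :=
  fun x y => forall R : brel A, is_cong R ->
    (forall k u v, F k u v -> R u v) -> R x y.

Definition releq (A : algebra) (R S : brel A) : Prop :=
  forall x y, R x y <-> S x y.

(* Variables of a term operation t(x_0,...,x_{k-1}, x_k) where x_i (i<k) is a
   tuple of length m i and x_k is a tuple of length ml. *)
Definition cvars (k : nat) (m : 'I_k -> nat) (ml : nat) : Type :=
  ({i : 'I_k & 'I_(m i)} + 'I_ml)%type.

Definition cenv (A : algebra) (k : nat) (m : 'I_k -> nat) (ml : nat)
  (x : forall i : 'I_k, 'I_(m i) -> car A) (y : 'I_ml -> car A)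
  : cvars m ml -> car A :=
  fun v => match v with
           | inl p => x (projT1 p) (projT2 p)
           | inr j => y j
           end.

(* alpha_0,...,alpha_{k-1} centralize beta modulo gamma (Bulatov), with n = k+1. *)
Definition centralizes (A : algebra) (k : nat) (alpha : 'I_k -> brel A)
  (beta gamma : brel A) : Prop :=
  forall (m : 'I_k -> nat) (a b : forall i : 'I_k, 'I_(m i) -> car A)
         (ml : nat) (c d : 'I_ml -> car A) (t : term A (cvars m ml)),
    (forall i j, alpha i (a i j) (b i j)) ->
    (forall i, exists j, a i j <> b i j) ->
    (forall j, beta (c j) (d j)) ->
    (exists j, c j <> d j) ->
    (forall s : 'I_k -> bool, (exists i, s i = false) ->
       gamma (teval (cenv (fun i => if s i then b i else a i) c) t)
             (teval (cenv (fun i => if s i then b i else a i) d) t)) ->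
    gamma (teval (cenv b c) t) (teval (cenv b d) t).

Definition hcomm (A : algebra) (k : nat) (alpha : 'I_k -> brel A) (beta : brel A)
  : brel A :=
  fun x y => forall gamma : brel A, is_cong gamma ->
    centralizes alpha beta gamma -> gamma x y.

Definition fin_nonempty (I : Type) (J : I -> Prop) : Prop :=
  (exists s : list I, forall i, J i <-> List.In i s) /\ (exists i, J i).

(* Every pair in a join of congruences is already in the join of finitely many
   of them, because the union of the finite subjoins is a congruence (it is a
   directed union and operations have finite arity).  Likewise the union U of
   the commutators [alpha, join of finitely many rho_i] is a congruence, and
   alpha centralizes the full join modulo U: a single instance of the
   centrality condition involves finitely many pairs of the full join and
   finitely many hypotheses modulo U, so it lives inside one finite subjoin,
   where the commutator's own centrality applies.  Hence the commutator with
   the full join is contained in U; the converse inclusion is monotonicity. *)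
From mathcomp Require Import all_boot.
From Stdlib Require Import FunctionalExtensionality.
From Stdlib Require List.
Import List (incl, incl_appl, incl_appr, incl_refl).
Set Implicit Arguments. Unset Strict Implicit.

Section Congruences.
Variable A : algebra.
Implicit Types R : brel A.

Lemma cong_refl R : is_cong R -> forall x, R x x.
Proof. by case. Qed.

Lemma cong_sym R : is_cong R -> forall x y, R x y -> R y x.
Proof. by case. Qed.

Lemma cong_trans R : is_cong R -> forall x y z, R x y -> R y z -> R x z.
Proof. by case. Qed.

Lemma cong_op R : is_cong R ->
  forall (f : sym A) (x y : 'I_(ar f) -> car A),
    (forall j, R (x j) (y j)) -> R (op x) (op y).
Proof. by case. Qed.

Lemma meet_cong (P : brel A -> Prop) :
  is_cong (fun x y => forall R, is_cong R -> P R -> R x y).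
Proof.
split=> [x R HR _ | x y Hxy R HR HP | x y z Hxy Hyz R HR HP | f x y Hxy R HR HP].
- exact: cong_refl.
- exact: cong_sym (Hxy R HR HP).
- exact: cong_trans (Hxy R HR HP) (Hyz R HR HP).
- by apply: cong_op => // j; apply: Hxy.
Qed.

Lemma cjoin_cong K (F : K -> brel A) : is_cong (cjoin F).
Proof. exact: meet_cong. Qed.

Lemma cjoin_ub K (F : K -> brel A) k u v : F k u v -> cjoin F u v.
Proof. by move=> H R _ HF; exact: HF H. Qed.

Lemma cjoin_min K (F : K -> brel A) R : is_cong R ->
  (forall k u v, F k u v -> R u v) -> forall x y, cjoin F x y -> R x y.
Proof. by move=> HR HF x y; apply. Qed.

Lemma hcomm_cong k (alpha : 'I_k -> brel A) beta : is_cong (hcomm alpha beta).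
Proof. exact: meet_cong. Qed.

Lemma hcomm_centralizes k (alpha : 'I_k -> brel A) beta :
  centralizes alpha beta (hcomm alpha beta).
Proof.
move=> m a b ml c d t Hab Hne Hcd Hne' Hs gamma Hg Hcent.
by apply: (Hcent) => // s Hs'; exact: Hs s Hs' gamma Hg Hcent.
Qed.

Lemma hcomm_min k (alpha : 'I_k -> brel A) beta gamma :
  is_cong gamma -> centralizes alpha beta gamma ->
  forall x y, hcomm alpha beta x y -> gamma x y.
Proof. by move=> Hg Hc x y; apply. Qed.

Lemma hcomm_mono k (alpha : 'I_k -> brel A) (beta beta' : brel A) :
  (forall u v, beta u v -> beta' u v) ->
  forall x y, hcomm alpha beta x y -> hcomm alpha beta' x y.
Proof.
move=> Hb x y H gamma Hg Hc; apply: H => // m a b ml c d t Hab Hne Hcd.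
by apply: Hc => // j; apply: Hb.
Qed.

End Congruences.

Section FiniteSubsets.
Variable I : Type.

Definition incl_mono (P : list I -> Prop) := forall s s', incl s s' -> P s -> P s'.

Lemma finite_common_list (T : finType) (Q : T -> list I -> Prop) :
  (forall j, incl_mono (Q j)) -> (forall j, exists s, Q j s) ->
  exists s, forall j, Q j s.
Proof.
move=> Hmono Hex.
suff [s Hs] : exists s, forall j, j \in enum T -> Q j s.
  by exists s => j; apply: Hs; rewrite mem_enum.
elim: (enum T) => [|j0 l [s IH]]; first by exists nil.
have [s0 Hs0] := Hex j0; exists (s0 ++ s)%list => j.
rewrite in_cons => /orP[/eqP -> | Hj].
- by apply: Hmono Hs0; apply: incl_appl; apply: incl_refl.
- by apply: Hmono (IH j Hj); apply: incl_appr; apply: incl_refl.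
Qed.

Variable A : algebra.

Definition list_union (G : list I -> brel A) : brel A :=
  fun x y => exists s, G s x y.

Lemma list_union_cong (G : list I -> brel A) :
  (forall s, is_cong (G s)) -> (forall x y, incl_mono (fun s => G s x y)) ->
  is_cong (list_union G).
Proof.
move=> HG Hmono; split.
- by move=> x; exists nil; apply: cong_refl.
- by move=> x y [s Hs]; exists s; apply: cong_sym.
- move=> x y z [s1 H1] [s2 H2]; exists (s1 ++ s2)%list.
  apply: (cong_trans (HG _) (y := y)).
  + by apply: Hmono H1; apply: incl_appl; apply: incl_refl.
  + by apply: Hmono H2; apply: incl_appr; apply: incl_refl.
- move=> f x y Hxy.
  have [s Hs] := finite_common_list (fun j => Hmono (x j) (y j)) Hxy.
  by exists s; apply: cong_op.
Qed.

Variable rho : I -> brel A.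

Definition cjoin_list (s : list I) : brel A :=
  cjoin (fun i : {i : I | List.In i s} => rho (proj1_sig i)).

Lemma cjoin_list_mono x y : incl_mono (fun s => cjoin_list s x y).
Proof.
move=> s s' Hss'; apply: cjoin_min; first exact: cjoin_cong.
by move=> [i Hi] u v Hr; apply: (cjoin_ub (k := exist _ i (Hss' i Hi))).
Qed.

Lemma cjoin_finite x y : cjoin rho x y -> list_union cjoin_list x y.
Proof.
apply: cjoin_min.
  by apply: list_union_cong => [s|]; [apply: cjoin_cong | apply: cjoin_list_mono].
move=> i u v Hr; exists [:: i].
exact: (cjoin_ub (k := exist (fun j => List.In j [:: i]) i (or_introl erefl))).
Qed.

Variables (k : nat) (alpha : 'I_k -> brel A).

Definition hcomm_finite_joins : brel A :=
  list_union (fun s => hcomm alpha (cjoin_list s)).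

Lemma hcomm_cjoin_list_mono x y :
  incl_mono (fun s => hcomm alpha (cjoin_list s) x y).
Proof. by move=> s s' Hss'; apply: hcomm_mono => u v; apply: cjoin_list_mono. Qed.

Lemma hcomm_finite_joins_cong : is_cong hcomm_finite_joins.
Proof.
by apply: list_union_cong => [s|]; [apply: hcomm_cong | apply: hcomm_cjoin_list_mono].
Qed.

Lemma centralizes_cjoin_finite :
  centralizes alpha (cjoin rho) hcomm_finite_joins.
Proof.
move=> m a b ml c d t Hab Hne Hcd Hne' Hs.
pose ev (f : 'I_k -> bool) e :=
  teval (cenv (fun i => if f i then b i else a i) e) t.
have [s1 H1] : exists s, forall j, cjoin_list s (c j) (d j).
  apply: finite_common_list => [j|j]; first exact: cjoin_list_mono.
  exact: cjoin_finite (Hcd j).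
have [s2 H2] : exists s, forall f : {ffun 'I_k -> bool},
    (exists i, f i = false) -> hcomm alpha (cjoin_list s) (ev f c) (ev f d).
  apply: finite_common_list => [f s s' Hss' Hf Hex | f].
    exact: hcomm_cjoin_list_mono Hss' (Hf Hex).
  case: (pickP (fun i => ~~ f i)) => [i /negbTE Hi | Hnone].
    by have [s Hs'] := Hs f (ex_intro _ i Hi); exists s.
  by exists nil => -[i Hi]; move: (Hnone i); rewrite Hi.
exists (s1 ++ s2)%list; apply: (hcomm_centralizes Hab Hne _ Hne').
  by move=> j; apply: cjoin_list_mono (H1 j); apply: incl_appl; apply: incl_refl.
move=> f [i Hi].
have -> : (fun i => if f i then b i else a i) =
          (fun i => if [ffun i => f i] i then b i else a i).
  by apply: functional_extensionality_dep => j; rewrite ffunE.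
apply: hcomm_cjoin_list_mono (H2 _ _); first by apply: incl_appr; apply: incl_refl.
by exists i; rewrite ffunE.
Qed.

Lemma hcomm_cjoin_finite x y :
  hcomm alpha (cjoin rho) x y -> hcomm_finite_joins x y.
Proof.
apply: hcomm_min; [exact: hcomm_finite_joins_cong | exact: centralizes_cjoin_finite].
Qed.

End FiniteSubsets.

Theorem mainTheorem14 (A : algebra) (n : nat) (hn : 2 <= n)
  (I : Type) (hI : inhabited I)
  (rho : I -> brel A) (hrho : forall i, is_cong (rho i))
  (alpha : 'I_n.-1 -> brel A) (halpha : forall i, is_cong (alpha i)) :
  releq (hcomm alpha (cjoin rho))
        (cjoin (fun J : {J : I -> Prop | fin_nonempty J} =>
                  hcomm alpha (cjoin (fun i : {i : I | proj1_sig J i} =>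
                                        rho (proj1_sig i))))).
Proof.
case: hI => i0 x y; split.
- move=> /hcomm_cjoin_finite [s Hs].
  have Hfin : fin_nonempty (fun i => List.In i (i0 :: s)).
    by split; [exists (i0 :: s) | exists i0; left].
  apply: (cjoin_ub (k := exist _ _ Hfin)).
  by apply: hcomm_cjoin_list_mono Hs => i Hi; right.
- apply: cjoin_min; first exact: hcomm_cong.
  move=> J; apply: hcomm_mono => u v; apply: cjoin_min; first exact: cjoin_cong.
  by move=> i; apply: cjoin_ub.
Qed.
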